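(* Let $\mathcal{X}=\sum_{k=1}^r\beta_k\bigcirc_{\ell=1}^d\mathbf{y}^{(\ell)}_k$ and $\mathcal{Y}=\sum_{k=1}^r\alpha_k\bigcirc_{\ell=1}^d\mathbf{y}^{(\ell)}_k$ be tensors in $\mathbb{C}^{n_1\times\cdots\times n_d}$ in standard form with the same unit vectors $\mathbf{y}^{(\ell)}_k$. Let $\epsilon\in(0,3/4]$ and for each $j\in[d]$ let $\mathbf{A}_j\in\mathbb{C}^{m_j\times n_j}$ be an $(\epsilon/4d)$-JL embedding into $\mathbb{C}^{m_j}$ of $$\mathcal{S}'_j:=\Big(\bigcup_{1\le h<k\le r}\{\mathbf{y}^{(j)}_k-\mathbf{y}^{(j)}_h,\ \mathbf{y}^{(j)}_k+\mathbf{y}^{(j)}_h,\ \mathbf{y}^{(j)}_k-\mathrm{i}\,\mathbf{y}^{(j)}_h,\ \mathbf{y}^{(j)}_k+\mathrm{i}\,\mathbf{y}^{(j)}_h\}\Big)\cup\{\mathbf{y}^{(j)}_k\}_{k\in[r]}.$$ Define $$\epsilon':=\begin{cases}\big(\epsilon+e\sqrt{r(r-1)}\,\epsilon^d\big)e & \text{if }\mu_{\mathcal{Y}}=0,\\ \epsilon\big(e+e^2\sqrt{r(r-1)}\max(\epsilon^{d-1},\mu_{\mathcal{Y}}^{d-1})\big)&\text{otherwise.}\end{cases}$$ Then, writing $\mathcal{Z}\times_{j=1}^d\mathbf{A}_j:=\mathcal{Z}\times_1\mathbf{A}_1\cdots\times_d\mathbf{A}_d$, $$\big|\langle\mathcal{X}\times_{j=1}^d\mathbf{A}_j,\mathcal{Y}\times_{j=1}^d\mathbf{A}_j\rangle-\langle\mathcal{X},\mathcal{Y}\rangle\big|\le2\epsilon'(\|\boldsymbol\beta\|_2^2+\|\boldsymbol\alpha\|_2^2)\le4\epsilon'\max\{\|\boldsymbol\beta\|_2^2,\|\boldsymbol\alpha\|_2^2\},$$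 and, if moreover $\mu'_{\mathcal{Y}}<(r-1)^{-1}$, the last quantity is at most $4\epsilon'\frac{\max\{\|\mathcal{X}\|^2,\|\mathcal{Y}\|^2\}}{1-(r-1)\mu'_{\mathcal{Y}}}$.
   Context: Tensors carry the inner product $\langle\mathcal{X},\mathcal{Y}\rangle=\sum\mathcal{X}_{i_1\dots i_d}\overline{\mathcal{Y}_{i_1\dots i_d}}$ and norm $\|\cdot\|$; $\bigcirc$ is the outer product; $(\mathcal{Z}\times_j\mathbf{U})_{i_1,\dots,\ell,\dots,i_d}=\sum_{i_j}\mathcal{Z}_{i_1,\dots,i_j,\dots,i_d}\mathbf{U}_{\ell,i_j}$; $\mathrm{i}$ is the imaginary unit, $e$ Euler's number. Standard form means $\|\mathbf{y}^{(\ell)}_k\|_2=1$ for all $\ell,k$. A matrix $\mathbf{A}$ is an $\epsilon$-JL embedding of $S$ if $\|\mathbf{A}x\|_2^2=(1+\epsilon_x)\|x\|_2^2$ with $\epsilon_x\in(-\epsilon,\epsilon)$ for all $x\in S$. Relative to the vectors $\mathbf{y}^{(\ell)}_k$: $\mu_{\mathcal{Y}}=\max_{\ell\in[d]}\max_{k\ne h}|\langle\mathbf{y}^{(\ell)}_k,\mathbf{y}^{(\ell)}_h\rangle|$ and $\mu'_{\mathcal{Y}}=\max_{k\ne h}\prod_{\ell=1}^d|\langle\mathbf{y}^{(\ell)}_k,\mathbf{y}^{(\ell)}_h\rangle|$. *)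

From HB Require Import structures.
From mathcomp Require Import all_boot all_order all_algebra.
From mathcomp Require Import complex.
From mathcomp Require Import reals sequences exp.
Set Implicit Arguments. Unset Strict Implicit. Unset Printing Implicit Defensive.
Import Order.TTheory GRing.Theory Num.Theory.
Local Open Scope ring_scope.
Local Open Scope complex_scope.

Section Defs.
Variable R : realType.
Local Notation C := R[i].

Definition re (z : C) : R := let: a +i* _ := z in a.
Definition cabs (z : C) : R := let: a +i* b := z in Num.sqrt (a ^+ 2 + b ^+ 2).

Definition vinner n (u v : 'cV[C]_n) : C := \sum_(i < n) u i 0 * (v i 0)^*.
Definition vnorm2 n (u : 'cV[C]_n) : R := \sum_(i < n) cabs (u i 0) ^+ 2.
Definition vnorm n (u : 'cV[C]_n) : R := Num.sqrt (vnorm2 u).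
Definition cnorm2 r (c : 'I_r -> C) : R := \sum_(k < r) cabs (c k) ^+ 2.

Definition Idx d (n : 'I_d -> nat) := {dffun forall j : 'I_d, 'I_(n j)}.
Definition tensor d (n : 'I_d -> nat) := Idx n -> C.

Definition outer d (n : 'I_d -> nat) (v : forall j : 'I_d, 'cV[C]_(n j)) : tensor n :=
  fun i => \prod_(j < d) v j (i j) 0.

Definition cp d (n : 'I_d -> nat) r (c : 'I_r -> C)
    (y : forall l : 'I_d, 'I_r -> 'cV[C]_(n l)) : tensor n :=
  fun i => \sum_(k < r) c k * outer (fun l => y l k) i.

Definition tinner d (n : 'I_d -> nat) (X Y : tensor n) : C :=
  \sum_(i : Idx n) X i * (Y i)^*.
Definition tnorm d (n : 'I_d -> nat) (X : tensor n) : R := Num.sqrt (re (tinner X X)).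

(* Z x_1 A_1 ... x_d A_d, written out: the composition of the mode products
   (Z x_j U)_{..l..} = sum_{i_j} Z_{..i_j..} U_{l,i_j} for j = 1..d *)
Definition mprod d (n m : 'I_d -> nat) (Z : tensor n)
    (A : forall j : 'I_d, 'M[C]_(m j, n j)) : tensor m :=
  fun l => \sum_(i : Idx n) Z i * \prod_(j < d) A j (l j) (i j).

Definition is_JL p q (eps : R) (A : 'M[C]_(p, q)) (S : 'cV[C]_q -> Prop) : Prop :=
  forall x, S x -> exists epsx : R,
    - eps < epsx < eps /\ vnorm2 (A *m x) = (1 + epsx) * vnorm2 x.

Definition Sprime q r (yj : 'I_r -> 'cV[C]_q) (x : 'cV[C]_q) : Prop :=
  (exists h k : 'I_r, (h < k)%N /\
     (x = yj k - yj h \/ x = yj k + yj h \/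
      x = yj k - 'i *: yj h \/ x = yj k + 'i *: yj h))
  \/ (exists k : 'I_r, x = yj k).

Definition standard_form d (n : 'I_d -> nat) r
    (y : forall l : 'I_d, 'I_r -> 'cV[C]_(n l)) : Prop :=
  forall l k, vnorm (y l k) = 1.

(* coherences mu_Y and mu'_Y (max over an empty range is 0) *)
Definition mu d (n : 'I_d -> nat) r (y : forall l : 'I_d, 'I_r -> 'cV[C]_(n l)) : R :=
  \big[Num.max/0]_(l < d) \big[Num.max/0]_(k < r) \big[Num.max/0]_(h < r | h != k)
     cabs (vinner (y l k) (y l h)).
Definition mu' d (n : 'I_d -> nat) r (y : forall l : 'I_d, 'I_r -> 'cV[C]_(n l)) : R :=
  \big[Num.max/0]_(k < r) \big[Num.max/0]_(h < r | h != k)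
     \prod_(l < d) cabs (vinner (y l k) (y l h)).

Definition eps' (eps muY : R) (d r : nat) : R :=
  let e := expR (1 : R) in
  let s := Num.sqrt ((r * (r - 1))%:R : R) in
  if muY == 0 then (eps + e * s * eps ^+ d) * e
  else eps * (e + e ^+ 2 * s * Num.max (eps ^+ (d - 1)) (muY ^+ (d - 1))).

End Defs.

From HB Require Import structures.
From mathcomp Require Import all_boot all_order all_algebra.
From mathcomp Require Import complex.
From mathcomp Require Import reals sequences exp.
From mathcomp Require Import ring lra.
Import Order.TTheory GRing.Theory Num.Theory.
Local Open Scope ring_scope.
Local Open Scope complex_scope.

(* Both inner products expand in the rank-one terms as
   sum_(k,h) beta_k conj(alpha_h) prod_j <y_jk, y_jh>, so the error is governed by
   prod_j <A_j y_jk, A_j y_jh> - prod_j <y_jk, y_jh>.  By polarization, the JL property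
   on S'_j perturbs each factor by at most t = 2 (eps / 4d); telescoping the product
   bounds the error by (1 + t)^d - 1 on the diagonal and by (mu + t)^d - mu^d off it,
   and AM-GM on |beta_k| |alpha_h| sums these into
   ((1 + t)^d - 1 + (r - 1)((mu + t)^d - mu^d)) / 2 (|beta|^2 + |alpha|^2).
   Since (1 + 1/2d)^d <= e, that coefficient is at most 4 eps'.  The same AM-GM
   bound on the off-diagonal part of the Gram sum gives
   |X|^2 >= (1 - (r - 1) mu') |beta|^2. *)

Set Implicit Arguments.
Unset Strict Implicit.

Section ComplexModulus.
Variable R : realType.
Local Notation C := R[i].
Implicit Types (x : R) (z w : C).

Lemma cabsE z : `|z| = (cabs z)%:C.
Proof. by case: z => a b; rewrite normc_def. Qed.

Lemma cabs0 : cabs (0 : C) = 0.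
Proof. by apply: complexI; rewrite -cabsE normr0. Qed.

Lemma cabs_ge0 z : 0 <= cabs z.
Proof. by case: z => a b; apply: sqrtr_ge0. Qed.

Lemma cabsM z w : cabs (z * w) = cabs z * cabs w.
Proof. by apply: complexI; rewrite rmorphM /= -!cabsE normrM. Qed.

Lemma cabsN z : cabs (- z) = cabs z.
Proof. by apply: complexI; rewrite -!cabsE normrN. Qed.

Lemma cabsJ z : cabs z^* = cabs z.
Proof. by apply: complexI; rewrite -!cabsE norm_conjC. Qed.

Lemma cabsD z w : cabs (z + w) <= cabs z + cabs w.
Proof. by rewrite -lecR rmorphD /= -!cabsE ler_normD. Qed.

Lemma cabsB z w : cabs (z - w) <= cabs z + cabs w.
Proof. by rewrite -(cabsN w) cabsD. Qed.

Lemma cabs_real x : cabs x%:C = `|x|.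
Proof. by apply: complexI; rewrite -cabsE normc_def /= expr0n addr0 sqrtr_sqr. Qed.

Lemma cabs_nat k : cabs (k%:R : C) = k%:R.
Proof. by apply: complexI; rewrite -cabsE normr_nat rmorph_nat. Qed.

Lemma cabs_i : cabs ('i : C) = 1.
Proof. by apply: complexI; rewrite -cabsE normCi. Qed.

Lemma cabs_sum (I : Type) (s : seq I) (P : pred I) (F : I -> C) :
  cabs (\sum_(i <- s | P i) F i) <= \sum_(i <- s | P i) cabs (F i).
Proof.
rewrite -lecR -cabsE raddf_sum /=; apply: le_trans (ler_norm_sum _ _ _) _.
by apply: ler_sum => i _; rewrite cabsE.
Qed.

Lemma cabs_prod (I : Type) (s : seq I) (P : pred I) (F : I -> C) :
  cabs (\prod_(i <- s | P i) F i) = \prod_(i <- s | P i) cabs (F i).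
Proof.
by apply: complexI; rewrite -cabsE rmorph_prod normr_prod; under eq_bigr do rewrite cabsE.
Qed.

Lemma mulcJ z : z * z^* = (cabs z ^+ 2)%:C.
Proof. by rewrite rmorphXn /= -cabsE normCK. Qed.

Lemma re_addc z w : re (z + w) = re z + re w.
Proof. by case: z; case: w. Qed.

Lemma re_ge_cabs z : - cabs z <= re z.
Proof.
case: z => a b; rewrite /cabs /= lerNl; apply: le_trans (ler_norm (- a)) _.
by rewrite normrN -sqrtr_sqr ler_sqrt ?addr_ge0 ?sqr_ge0 // lerDl sqr_ge0.
Qed.

End ComplexModulus.

Section InnerProduct.
Variables (R : realType) (q : nat).
Local Notation C := R[i].
Implicit Types (a b : C) (u v : 'cV[C]_q).

Lemma vnorm2_ge0 u : 0 <= vnorm2 u.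
Proof. by apply: sumr_ge0 => i _; rewrite sqr_ge0. Qed.

Lemma vinner_self u : vinner u u = (vnorm2 u)%:C.
Proof. by rewrite /vinner /vnorm2 raddf_sum; apply: eq_bigr => i _; rewrite mulcJ. Qed.

Lemma vinnerC u v : vinner u v = (vinner v u)^*.
Proof.
rewrite /vinner rmorph_sum; apply: eq_bigr => i _.
by rewrite rmorphM /= conjcK mulrC.
Qed.

(* [ring] cannot use ['i ^+ 2 = -1], so the difference of the two sides is exhibited as
   a multiple of ['i ^+ 2 + 1]. *)
Lemma polarizationC a b :
  4 * (a * b^*) = (a + b) * (a + b)^* - (a - b) * (a - b)^*
                + 'i * ((a + 'i * b) * (a + 'i * b)^* - (a - 'i * b) * (a - 'i * b)^*).
Proof.
rewrite !rmorphD !rmorphN !rmorphM /= conjCi.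
apply/eqP; rewrite -subr_eq0; apply/eqP.
transitivity (('i ^+ 2 + 1) * (2 * (a * b^*) - 2 * (b * a^*))); first by ring.
by rewrite sqrCi addNr mul0r.
Qed.

Lemma parallelogram4C a b :
  (a + b) * (a + b)^* + (a - b) * (a - b)^*
  + (a + 'i * b) * (a + 'i * b)^* + (a - 'i * b) * (a - 'i * b)^*
  = 4 * (a * a^* + b * b^*).
Proof.
rewrite !rmorphD !rmorphN !rmorphM /= conjCi.
apply/eqP; rewrite -subr_eq0; apply/eqP.
transitivity (- 2 * ('i ^+ 2 + 1) * (b * b^*)); first by ring.
by rewrite sqrCi addNr mulr0 mul0r.
Qed.

Lemma vinner_polarization u v :
  4 * vinner u v = ((vnorm2 (u + v))%:C - (vnorm2 (u - v))%:C)
    + 'i * ((vnorm2 (u + 'i *: v))%:C - (vnorm2 (u - 'i *: v))%:C).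
Proof.
rewrite -!vinner_self /vinner !mulr_sumr -!sumrB mulr_sumr -big_split /=.
by apply: eq_bigr => t _; rewrite !mxE polarizationC.
Qed.

Lemma vnorm2_parallelogram4 u v :
  vnorm2 (u + v) + vnorm2 (u - v) + vnorm2 (u + 'i *: v) + vnorm2 (u - 'i *: v)
  = 4 * (vnorm2 u + vnorm2 v).
Proof.
apply: complexI; rewrite rmorphM rmorph_nat !rmorphD /= -!vinner_self /vinner -!big_split /=.
rewrite mulr_sumr.
by apply: eq_bigr => t _; rewrite !mxE parallelogram4C.
Qed.

End InnerProduct.

Lemma cnorm2_ge0 (R : realType) r (c : 'I_r -> R[i]) : 0 <= cnorm2 c.
Proof. by apply: sumr_ge0 => k _; rewrite sqr_ge0. Qed.

Section JohnsonLindenstrauss.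
Variables (R : realType) (p q : nat) (delta : R) (A : 'M[R[i]]_(p, q)).
Variable S : 'cV[R[i]]_q -> Prop.
Hypothesis JL_A : is_JL delta A S.

Lemma JL_vnorm2_err x : S x -> `|vnorm2 (A *m x) - vnorm2 x| <= delta * vnorm2 x.
Proof.
case/JL_A=> e [/andP[e_gt e_lt] ->].
rewrite (_ : _ - _ = e * vnorm2 x); last by ring.
rewrite normrM (ger0_norm (vnorm2_ge0 _)) ler_wpM2r ?vnorm2_ge0 //.
by rewrite ltW // ltr_norml e_gt e_lt.
Qed.

Lemma JL_vinner_err x y :
  S (x + y) -> S (x - y) -> S (x + 'i *: y) -> S (x - 'i *: y) ->
  cabs (vinner (A *m x) (A *m y) - vinner x y) <= delta * (vnorm2 x + vnorm2 y).
Proof.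
move=> S1 S2 S3 S4.
pose err z := vnorm2 (A *m z) - vnorm2 z.
have polar : 4 * (vinner (A *m x) (A *m y) - vinner x y)
    = ((err (x + y))%:C - (err (x - y))%:C)
      + 'i * ((err (x + 'i *: y))%:C - (err (x - 'i *: y))%:C).
  rewrite mulrBr !vinner_polarization /err !rmorphB /=.
  by rewrite !mulmxDr !mulmxN !scalemxAr; ring.
have err_le z : S z -> cabs (err z)%:C <= delta * vnorm2 z.
  by move=> Sz; rewrite cabs_real; apply: JL_vnorm2_err.
have : cabs (4 * (vinner (A *m x) (A *m y) - vinner x y)) <= 4 * (delta * (vnorm2 x + vnorm2 y)).
  rewrite polar; apply: le_trans (cabsD _ _) _; rewrite cabsM cabs_i mul1r.
  apply: le_trans (lerD (cabsB _ _) (cabsB _ _)) _.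
  by rewrite mulrCA -vnorm2_parallelogram4 !mulrDr addrA !lerD ?err_le.
by rewrite cabsM cabs_nat ler_pM2l.
Qed.

End JohnsonLindenstrauss.

Lemma JL_Sprime_vinner_err (R : realType) p q r (yj : 'I_r -> 'cV[R[i]]_q)
    (B : 'M[R[i]]_(p, q)) (delta : R) (k h : 'I_r) :
  (forall k, vnorm2 (yj k) = 1) -> is_JL delta B (Sprime yj) ->
  cabs (vinner (B *m yj k) (B *m yj h) - vinner (yj k) (yj h)) <= 2 * delta.
Proof.
move=> unit JL_B; have JL_pair (h' k' : 'I_r) : (h' < k')%N ->
    cabs (vinner (B *m yj k') (B *m yj h') - vinner (yj k') (yj h')) <= 2 * delta.
  move=> lt_hk; apply: le_trans (JL_vinner_err JL_B _ _ _ _) _;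
    try by left; exists h', k'; split=> //; tauto.
  by rewrite !unit mulrC.
case: (ltngtP h k) => [/JL_pair // | lt_kh | /val_inj eq_hk].
  by rewrite vinnerC (vinnerC (yj k)) -rmorphB cabsJ JL_pair.
have Sk : Sprime yj (yj k) by right; exists k.
have := JL_vnorm2_err JL_B Sk; rewrite eq_hk !vinner_self -rmorphB cabs_real unit mulr1.
by move=> err_le; apply: (le_trans err_le); rewrite ler_peMl ?ler1n // (le_trans _ err_le).
Qed.

Lemma big_distr_Idx (R : comNzRingType) d (n : 'I_d -> nat)
    (F : forall j : 'I_d, 'I_(n j) -> R) :
  \sum_(i : Idx n) \prod_(j < d) F j (i j) = \prod_(j < d) \sum_(t : 'I_(n j)) F j t.
Proof.
pose T_ : 'I_d -> finType := fun j => 'I_(n j).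
pose P_ := fun j : 'I_d => [ffun t : T_ j => F j t].
transitivity (\prod_(j < d) \sum_(t : T_ j) P_ j t); last first.
  by apply: eq_bigr => j _; apply: eq_bigr => t _; rewrite ffunE.
rewrite (eq_bigr _ (fun j _ => big_tag (fun j (t : T_ j) => P_ j t) j)).
rewrite bigA_distr_big_dep -big_fprod.
rewrite (reindex (@dffun_of_fprod _ T_)); last exact/onW_bij/dffun_of_fprod_bij.
apply: eq_bigr => t _; apply: eq_bigr => j _.
by rewrite /P_ /dffun_of_fprod !ffunE.
Qed.

Section RankOneExpansions.
Variables (R : realType) (d r : nat).
Local Notation C := R[i].
Local Notation family n := (forall l : 'I_d, 'I_r -> 'cV[C]_(n l)).
Implicit Types (n : 'I_d -> nat) (b a c : 'I_r -> C).

Lemma mprod_cp n m (A : forall j : 'I_d, 'M[C]_(m j, n j)) c (y : family n) :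
  mprod (cp c y) A =1 cp c (fun j k => A j *m y j k).
Proof.
move=> l; rewrite /mprod /cp /outer.
under eq_bigr do rewrite mulr_suml.
rewrite exchange_big /=; apply: eq_bigr => k _.
under eq_bigr do rewrite -mulrA -big_split /=.
rewrite -mulr_sumr (big_distr_Idx (fun j t => y j k t 0 * A j (l j) t)); congr (_ * _).
by apply: eq_bigr => j _; rewrite mxE; apply: eq_bigr => t _; rewrite mulrC.
Qed.

Lemma tinner_cp n b a (z : family n) :
  tinner (cp b z) (cp a z) =
  \sum_(k < r) \sum_(h < r) b k * (a h)^* * \prod_(j < d) vinner (z j k) (z j h).
Proof.
rewrite /tinner /cp /outer.
under eq_bigr => i _ do rewrite rmorph_sum mulr_suml; rewrite exchange_big /=.
apply: eq_bigr => k _.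
under eq_bigr => i _ do rewrite mulr_sumr; rewrite exchange_big /=.
apply: eq_bigr => h _.
under eq_bigr => i _ do rewrite rmorphM rmorph_prod /= mulrACA -big_split /=.
by rewrite -mulr_sumr (big_distr_Idx (fun j t => z j k t 0 * (z j h t 0)^*)).
Qed.

Lemma tinner_mprod_cp_sub n m (A : forall j : 'I_d, 'M[C]_(m j, n j)) b a (y : family n) :
  tinner (mprod (cp b y) A) (mprod (cp a y) A) - tinner (cp b y) (cp a y) =
  \sum_(k < r) \sum_(h < r) b k * (a h)^* *
     (\prod_(j < d) vinner (A j *m y j k) (A j *m y j h)
      - \prod_(j < d) vinner (y j k) (y j h)).
Proof.
have -> : tinner (mprod (cp b y) A) (mprod (cp a y) A) =
    tinner (cp b (fun j k => A j *m y j k)) (cp a (fun j k => A j *m y j k)).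
  by apply: eq_bigr => i _; rewrite !mprod_cp.
rewrite !tinner_cp -sumrB; apply: eq_bigr => k _; rewrite -sumrB.
by apply: eq_bigr => h _; rewrite mulrBr.
Qed.

Lemma standard_form_vnorm2 n (y : family n) l k : standard_form y -> vnorm2 (y l k) = 1.
Proof.
by move=> /(_ l k) unit; rewrite -(sqr_sqrtr (vnorm2_ge0 (y l k))) [Num.sqrt _]unit expr1n.
Qed.

Lemma mu_ge0 n (y : family n) : 0 <= mu y.
Proof. exact: bigmax_ge_id. Qed.

Lemma cabs_vinner_le_mu n (y : family n) l k h : h != k -> cabs (vinner (y l k) (y l h)) <= mu y.
Proof.
by move=> hk; apply: (bigmax_sup l) => //; apply: (bigmax_sup k) => //; apply: (bigmax_sup h).
Qed.

Lemma prod_cabs_vinner_le_mu' n (y : family n) k h :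
  h != k -> \prod_(l < d) cabs (vinner (y l k) (y l h)) <= mu' y.
Proof.
by move=> hk; apply: (bigmax_sup k) => //; apply: (bigmax_sup h).
Qed.

End RankOneExpansions.

Section ErrorEstimates.
Variable R : realType.
Local Notation C := R[i].

Lemma cabs_prodB_le (I : Type) (s : seq I) (a b : I -> C) (B : I -> R) (t : R) :
  0 <= t -> (forall j, 0 <= B j) -> (forall j, cabs (a j - b j) <= t) ->
  (forall j, cabs (b j) <= B j) ->
  cabs (\prod_(j <- s) a j - \prod_(j <- s) b j) <=
    \prod_(j <- s) (B j + t) - \prod_(j <- s) B j.
Proof.
move=> t_ge0 B_ge0 ab_le b_le; elim: s => [|x s IH]; first by rewrite !big_nil !subrr cabs0.
rewrite !big_cons.
set P := \prod_(j <- s) a j in IH *; set Q := \prod_(j <- s) b j in IH *.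
set PB := \prod_(j <- s) (B j + t) in IH *; set QB := \prod_(j <- s) B j in IH *.
have a_le : cabs (a x) <= B x + t.
  by rewrite -(subrK (b x) (a x)) addrC (le_trans (cabsD _ _)) // lerD.
have Q_le : cabs Q <= QB.
  by rewrite cabs_prod; apply: ler_prod => j _; rewrite cabs_ge0 b_le.
rewrite (_ : a x * P - b x * Q = a x * (P - Q) + (a x - b x) * Q); last by ring.
rewrite (_ : (B x + t) * PB - B x * QB = (B x + t) * (PB - QB) + t * QB); last by ring.
by apply: le_trans (cabsD _ _) _; rewrite !cabsM lerD // ler_pM ?cabs_ge0.
Qed.

Lemma sum_diag_offdiag r (k : 'I_r) (D c : R) :
  \sum_(h < r) (if h == k then D else c) = D + (r%:R - 1) * c.
Proof.
rewrite (bigD1 k) //= eqxx (eq_bigr (fun=> c)) => [|h /negbTE -> //].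
rewrite sumr_const cardC1 card_ord; case: r k => [[] //|r' k].
by rewrite /= -natr1 addrK mulr_natl.
Qed.

Lemma cabs_form_le r (b a : 'I_r -> C) (w : 'I_r -> 'I_r -> C) (D c : R) :
  (forall k, cabs (w k k) <= D) -> (forall k h, h != k -> cabs (w k h) <= c) ->
  cabs (\sum_(k < r) \sum_(h < r) b k * (a h)^* * w k h) <=
    (D + (r%:R - 1) * c) / 2 * (cnorm2 b + cnorm2 a).
Proof.
move=> diag_le offdiag_le; pose W (k h : 'I_r) := if h == k then D else c.
have term_le k h : cabs (b k * (a h)^* * w k h)
    <= (cabs (b k) ^+ 2 + cabs (a h) ^+ 2) / 2 * W k h.
  rewrite !cabsM cabsJ ler_pM ?mulr_ge0 ?cabs_ge0 ?(leif_mean_square _ _).1 //.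
  by rewrite /W; case: eqVneq => [->|/offdiag_le].
apply: (le_trans (cabs_sum _ _ _)).
apply: (@le_trans _ _ (\sum_(k < r) \sum_(h < r)
                        (cabs (b k) ^+ 2 + cabs (a h) ^+ 2) / 2 * W k h)).
  by apply: ler_sum => k _; apply: (le_trans (cabs_sum _ _ _)); apply: ler_sum.
suff -> : \sum_(k < r) \sum_(h < r) (cabs (b k) ^+ 2 + cabs (a h) ^+ 2) / 2 * W k h
          = (D + (r%:R - 1) * c) / 2 * (cnorm2 b + cnorm2 a) by [].
pose f k := cabs (b k) ^+ 2; pose g h := cabs (a h) ^+ 2.
transitivity (2^-1 * (\sum_(k < r) \sum_(h < r) f k * W k h)
              + 2^-1 * (\sum_(k < r) \sum_(h < r) g h * W k h)).
  rewrite !mulr_sumr -big_split; apply: eq_bigr => k _.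
  by rewrite !mulr_sumr -big_split; apply: eq_bigr => h _ /=; rewrite /f /g; ring.
rewrite [X in _ * X + _](eq_bigr (fun k => f k * (D + (r%:R - 1) * c))) => [|k _]; last first.
  by rewrite -mulr_sumr sum_diag_offdiag.
rewrite exchange_big [X in _ + _ * X](eq_bigr (fun h => g h * (D + (r%:R - 1) * c))) => [|h _].
  by rewrite -!mulr_suml /cnorm2; ring.
rewrite -mulr_sumr (eq_bigr (fun k => if k == h then D else c)) ?sum_diag_offdiag //.
by move=> k _; rewrite /W eq_sym.
Qed.

End ErrorEstimates.

Section ProjectedInnerProduct.
Variables (R : realType) (d r : nat) (n m : 'I_d -> nat).
Variable y : forall l : 'I_d, 'I_r -> 'cV[R[i]]_(n l).
Hypothesis y_std : standard_form y.

Lemma cabs_tinner_mprod_cp_sub (A : forall j : 'I_d, 'M[R[i]]_(m j, n j)) (delta : R)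
    (beta alpha : 'I_r -> R[i]) :
  0 <= delta -> (forall j : 'I_d, is_JL delta (A j) (Sprime (y j))) ->
  cabs (tinner (mprod (cp beta y) A) (mprod (cp alpha y) A)
        - tinner (cp beta y) (cp alpha y))
  <= ((1 + 2 * delta) ^+ d - 1 + (r%:R - 1) * ((mu y + 2 * delta) ^+ d - mu y ^+ d)) / 2
     * (cnorm2 beta + cnorm2 alpha).
Proof.
move=> delta_ge0 JL_A; rewrite tinner_mprod_cp_sub.
have t_ge0 : 0 <= 2 * delta by rewrite mulr_ge0.
have vinner_err j k h :=
  JL_Sprime_vinner_err k h (fun k => standard_form_vnorm2 j k y_std) (JL_A j).
apply: cabs_form_le => [k | k h hk].
  have := cabs_prodB_le (index_enum 'I_d) (B := fun=> 1) t_ge0 (fun=> ler01)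
    (fun j => vinner_err j k k).
  rewrite !prodr_const card_ord expr1n; apply=> j.
  by rewrite vinner_self standard_form_vnorm2 // cabs_real normr1.
have := cabs_prodB_le (index_enum 'I_d) (B := fun=> mu y) t_ge0 (fun=> mu_ge0 y)
  (fun j => vinner_err j k h).
by rewrite !prodr_const card_ord; apply=> j; apply: cabs_vinner_le_mu.
Qed.

Lemma cnorm2_le_tinner_cp (b : 'I_r -> R[i]) :
  cnorm2 b * (1 - (r%:R - 1) * mu' y) <= re (tinner (cp b y) (cp b y)).
Proof.
pose w k h := if h == k then 0 else \prod_(j < d) vinner (y j k) (y j h).
have split_diag : tinner (cp b y) (cp b y)
    = \sum_(k < r) \sum_(h < r) b k * (b h)^* * w k h + (cnorm2 b)%:C.
  rewrite tinner_cp /cnorm2 raddf_sum -big_split /=; apply: eq_bigr => k _.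
  rewrite (bigD1 k) //= [in RHS](bigD1 k) //= /w eqxx mulr0 add0r addrC; congr (_ + _).
    by apply: eq_bigr => h /negbTE ->.
  rewrite big1 ?mulr1 -?mulcJ // => j _.
  by rewrite vinner_self standard_form_vnorm2.
have offdiag_le : cabs (\sum_(k < r) \sum_(h < r) b k * (b h)^* * w k h)
    <= (0 + (r%:R - 1) * mu' y) / 2 * (cnorm2 b + cnorm2 b).
  apply: cabs_form_le => [k | k h hk]; first by rewrite /w eqxx cabs0.
  by rewrite /w (negbTE hk) cabs_prod prod_cabs_vinner_le_mu'.
rewrite split_diag re_addc.
have := re_ge_cabs (\sum_(k < r) \sum_(h < r) b k * (b h)^* * w k h).
move: offdiag_le; rewrite add0r [re (cnorm2 b)%:C]/=.
set x := re _; set cx := cabs _; lra.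
Qed.

Lemma cnorm2_le_tnorm_cp (b : 'I_r -> R[i]) : (r%:R - 1) * mu' y < 1 ->
  cnorm2 b <= tnorm (cp b y) ^+ 2 / (1 - (r%:R - 1) * mu' y).
Proof.
rewrite -subr_gt0 => den_gt0; have lb := cnorm2_le_tinner_cp b.
by rewrite ler_pdivlMr // /tnorm sqr_sqrtr // (le_trans _ lb) // mulr_ge0 ?cnorm2_ge0 ?ltW.
Qed.

End ProjectedInnerProduct.

Section PowerBounds.
Variable R : realType.
Implicit Types (x t : R) (k : nat).

Lemma exprDn_sub_le x t k : 0 <= x -> 0 <= t ->
  (x + t) ^+ k - x ^+ k <= k%:R * t * (x + t) ^+ k.-1.
Proof.
move=> x_ge0 t_ge0; rewrite subrXX (_ : x + t - x = t); last by ring.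
rewrite [k%:R * t]mulrC -mulrA ler_wpM2l //.
have term_le (i : 'I_k) : (x + t) ^+ (k.-1 - i) * x ^+ i <= (x + t) ^+ k.-1.
  have le_ik : (i <= k.-1)%N by rewrite -ltnS (leq_trans (ltn_ord i)) // leqSpred.
  rewrite -{2}(subnK le_ik) exprD ler_wpM2l ?exprn_ge0 ?addr_ge0 //.
  by rewrite lerXn2r ?nnegrE ?addr_ge0 // lerDl.
apply: le_trans (ler_sum _ (fun i _ => term_le i)) _.
by rewrite sumr_const card_ord mulr_natl.
Qed.

Lemma exprDn_le_expR1 x t k : 0 <= x -> 0 <= t -> k%:R * t <= x ->
  (x + t) ^+ k <= x ^+ k * expR 1.
Proof.
rewrite le_eqVlt => /orP[/eqP <- t_ge0 | x_gt0 t_ge0 kt_le].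
  case: k => [|k] kt_le; first by rewrite !expr0 mul1r ltW // expR_gt1.
  have -> : t = 0 by apply/le_anti; rewrite t_ge0 -(pmulr_rle0 _ (ltr0Sn _ k)) kt_le.
  by rewrite addr0 expr0n mul0r.
have -> : x + t = x * (1 + t / x) by field; rewrite gt_eqF.
rewrite exprMn ler_wpM2l ?exprn_ge0 ?(ltW x_gt0) //.
apply: (@le_trans _ _ (expR (t / x) ^+ k)).
  by rewrite lerXn2r ?nnegrE ?expR_ge0 ?addr_ge0 ?divr_ge0 ?(ltW x_gt0) ?expR_ge1Dx.
by rewrite -expRM_natl ler_expR mulrA ler_pdivrMr // mul1r.
Qed.

Lemma natr_sub1_le_sqrt k : k%:R - 1 <= Num.sqrt ((k * (k - 1))%:R : R).
Proof.
case: k => [|k]; first by rewrite (le_trans _ (sqrtr_ge0 _)) // sub0r lerN10.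
rewrite -natr1 addrK subn1 /= -(ger0_norm (ler0n _ k)) -sqrtr_sqr.
by rewrite ler_sqrt ?ler0n // -natrX ler_nat mulnC leq_mul2l leqnSn orbT.
Qed.

End PowerBounds.

Section EpsPrimeBounds.
Variables (R : realType) (eps : R) (d r : nat).
Hypothesis eps_ge0 : 0 <= eps.
(* The per-factor error [2 * delta] of [JL_Sprime_vinner_err] for [delta = eps / 4d];
   it is [0] when [d = 0], since [x / 0 = 0]. *)
Local Notation t := (2 * (eps / (4 * d%:R))).

Lemma JL_step_ge0 : 0 <= t.
Proof. by rewrite mulr_ge0 ?divr_ge0 ?mulr_ge0. Qed.

Lemma natr_mul_JL_step_le : d%:R * t <= eps / 2.
Proof.
have [->|d_gt0] := posnP d; first by rewrite mul0r divr_ge0.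
by rewrite (_ : d%:R * _ = eps / 2) //; field; rewrite pnatr_eq0 -lt0n.
Qed.

Lemma natr_pred_mul_JL_step_le : d.-1%:R * t <= eps / 2.
Proof.
by apply: le_trans _ natr_mul_JL_step_le; rewrite ler_wpM2r ?JL_step_ge0 // ler_nat leq_pred.
Qed.

Lemma JL_step_le : t <= eps.
Proof.
have [d0|d_gt0] := posnP d; first by rewrite d0 mulr0 invr0 !mulr0.
have t_le_dt : t <= d%:R * t by rewrite ler_peMl ?JL_step_ge0 // ler1n.
have half_le : eps / 2 <= eps by rewrite ler_pdivrMr // ler_peMr // ler1n.
exact: le_trans t_le_dt (le_trans natr_mul_JL_step_le half_le).
Qed.

Lemma self_err_le : eps <= 2 -> (1 + t) ^+ d - 1 <= eps / 2 * expR 1.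
Proof.
move=> eps_le2; have := exprDn_sub_le d ler01 JL_step_ge0; rewrite expr1n => /le_trans; apply.
have := exprDn_le_expR1 (k := d.-1) ler01 JL_step_ge0; rewrite expr1n mul1r => pow_le.
apply: ler_pM (mulr_ge0 (ler0n _ _) JL_step_ge0) (exprn_ge0 _ (addr_ge0 ler01 JL_step_ge0))
  natr_mul_JL_step_le (pow_le _).
by apply: le_trans natr_pred_mul_JL_step_le _; rewrite ler_pdivrMr // mul1r.
Qed.

Lemma cross_err_le (mu : R) : 0 <= mu ->
  (mu + t) ^+ d - mu ^+ d <= eps / 2 * Num.max (eps ^+ (d - 1)) (mu ^+ (d - 1)) * expR 1.
Proof.
move=> mu_ge0; apply: le_trans (exprDn_sub_le d mu_ge0 JL_step_ge0) _.
set M := Num.max eps mu; have M_ge0 : 0 <= M by rewrite le_max eps_ge0.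
have -> : Num.max (eps ^+ (d - 1)) (mu ^+ (d - 1)) = M ^+ d.-1.
  rewrite subn1 /M; case: (leP eps mu) => [le_em | /ltW le_me].
    by rewrite !max_r // lerXn2r.
  by rewrite !max_l // lerXn2r.
rewrite -[X in _ <= X]mulrA.
apply: ler_pM (mulr_ge0 (ler0n _ _) JL_step_ge0) (exprn_ge0 _ (addr_ge0 mu_ge0 JL_step_ge0))
  natr_mul_JL_step_le _.
have le_Mt : (mu + t) ^+ d.-1 <= (M + t) ^+ d.-1.
  by rewrite lerXn2r ?nnegrE ?addr_ge0 ?JL_step_ge0 // lerD2r le_max lexx orbT.
apply: le_trans le_Mt (exprDn_le_expR1 M_ge0 JL_step_ge0 _).
apply: le_trans natr_pred_mul_JL_step_le _; rewrite le_max; apply/orP; left.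
by rewrite ler_pdivrMr // ler_peMr // ler1n.
Qed.

Lemma cross_err0_le : (0 + t) ^+ d - 0 ^+ d <= eps ^+ d.
Proof.
have t_pow_le : t ^+ d <= eps ^+ d by rewrite lerXn2r ?nnegrE ?JL_step_ge0 ?JL_step_le.
by rewrite add0r (le_trans _ t_pow_le) // gerBl exprn_ge0.
Qed.

Lemma eps'_ge0 (mu : R) : 0 <= mu -> 0 <= eps' eps mu d r.
Proof.
move=> mu_ge0; rewrite /eps'; case: eqP => _.
  by rewrite mulr_ge0 ?addr_ge0 ?mulr_ge0 ?exprn_ge0 ?expR_ge0 ?sqrtr_ge0.
by rewrite mulr_ge0 ?addr_ge0 ?mulr_ge0 ?exprn_ge0 ?expR_ge0 ?sqrtr_ge0 // le_max exprn_ge0.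
Qed.

Lemma JL_err_le_eps' (mu : R) : eps <= 2 -> 0 <= mu ->
  (1 + t) ^+ d - 1 + (r%:R - 1) * ((mu + t) ^+ d - mu ^+ d) <= 4 * eps' eps mu d r.
Proof.
move=> eps_le2 mu_ge0; have self_le := self_err_le eps_le2.
have cross_le' := cross_err_le mu_ge0.
rewrite /eps'; set E := expR (1 : R) in self_le cross_le' *; set s := Num.sqrt _.
have E_ge1 : 1 <= E by rewrite ltW // expR_gt1.
have s_ge0 : 0 <= s by apply: sqrtr_ge0.
have cross_ge0 : 0 <= (mu + t) ^+ d - mu ^+ d.
  by rewrite subr_ge0 lerXn2r ?nnegrE ?addr_ge0 ?JL_step_ge0 // lerDl JL_step_ge0.
have cross_le : (r%:R - 1) * ((mu + t) ^+ d - mu ^+ d) <= s * ((mu + t) ^+ d - mu ^+ d).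
  by rewrite ler_wpM2r // natr_sub1_le_sqrt.
have epsE_ge0 : 0 <= eps * E by rewrite mulr_ge0 // (le_trans ler01).
case: eqP => [mu0 | _].
  have := cross_err0_le; rewrite -mu0 => cross0_le.
  have : s * ((mu + t) ^+ d - mu ^+ d) <= E * E * (s * eps ^+ d).
    apply: le_trans (ler_wpM2l s_ge0 cross0_le) _.
    by rewrite ler_peMl ?mulr_ge0 ?exprn_ge0 // mulr_ege1.
  nra.
set Mx := Num.max _ _ in cross_le' *; have Mx_ge0 : 0 <= Mx by rewrite le_max exprn_ge0.
have : s * ((mu + t) ^+ d - mu ^+ d) <= eps * (E * E * s * Mx).
  apply: le_trans (ler_wpM2l s_ge0 cross_le') _.
  have : 0 <= eps * s * Mx * E by rewrite !mulr_ge0 // (le_trans ler01).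
  nra.
nra.
Qed.

End EpsPrimeBounds.

Unset Implicit Arguments.

Theorem corollary1 (R : realType) (d r : nat) (n m : 'I_d -> nat)
    (y : forall l : 'I_d, 'I_r -> 'cV[R[i]]_(n l)) (beta alpha : 'I_r -> R[i])
    (eps : R) (A : forall j : 'I_d, 'M[R[i]]_(m j, n j)) :
  standard_form y ->
  0 < eps <= 3 / 4 ->
  (forall j : 'I_d, is_JL (eps / (4 * d%:R)) (A j) (Sprime (y j))) ->
  let X := cp beta y in
  let Y := cp alpha y in
  let e' := eps' eps (mu y) d r in
  [/\ cabs (tinner (mprod X A) (mprod Y A) - tinner X Y)
        <= 2 * e' * (cnorm2 beta + cnorm2 alpha),
      2 * e' * (cnorm2 beta + cnorm2 alpha)
        <= 4 * e' * Num.max (cnorm2 beta) (cnorm2 alpha)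
    & (r%:R - 1) * mu' y < 1 ->
      4 * e' * Num.max (cnorm2 beta) (cnorm2 alpha)
        <= 4 * e' * Num.max (tnorm X ^+ 2) (tnorm Y ^+ 2) / (1 - (r%:R - 1) * mu' y)].
Proof.
move=> y_std /andP[eps_gt0 eps_le] JL_A X Y e'.
have eps_ge0 := ltW eps_gt0.
have delta_ge0 : 0 <= eps / (4 * d%:R) by rewrite divr_ge0 ?mulr_ge0.
have e'_ge0 : 0 <= e' := eps'_ge0 d r eps_ge0 (mu_ge0 y).
have eps_le2 : eps <= 2 by apply: le_trans eps_le _; lra.
have err_le := JL_err_le_eps' d r eps_ge0 eps_le2 (mu_ge0 y).
split.
- apply: le_trans (cabs_tinner_mprod_cp_sub y_std beta alpha delta_ge0 JL_A) _.
  rewrite ler_wpM2r ?addr_ge0 ?cnorm2_ge0 // ler_pdivrMr //.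
  by rewrite (_ : 2 * e' * 2 = 4 * e') //; ring.
- rewrite (_ : 4 * e' = 2 * e' * 2) -?mulrA ?ler_wpM2l ?mulr_ge0 //; last by ring.
  by rewrite mulr_natl mulr2n lerD // le_max lexx ?orbT.
- move=> mu'_lt1; rewrite -!mulrA !ler_wpM2l // maxr_pMl ?invr_ge0 ?subr_ge0 ?(ltW mu'_lt1) //.
  exact: le_max2 (cnorm2_le_tnorm_cp y_std beta mu'_lt1) (cnorm2_le_tnorm_cp y_std alpha mu'_lt1).
Qed.
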